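(* Let $p\ge 2$ be an integer and $\eta>0$. Then $\tau_\ell^-(s)\le\frac{\pi}{2}$ for every $s\in[0,1]$.
   Context: For an integer $p\ge 2$ and a real parameter $\eta>-1$, define for $\tau\ge 0$ and $s\in[-1,1]$ $$\ell_-(\tau,s)=\cos\tau\,\sin\!\Big(\tau\eta s-\tfrac{\pi}{p}\Big)+s\sin\tau\,\cos\!\Big(\tau\eta s-\tfrac{\pi}{p}\Big),$$ and let $\tau_\ell^-(s)$ be the smallest positive root in $\tau$ of $\ell_-(\tau,s)=0$. *)

From Stdlib Require Import Reals.
Open Scope R_scope.

Definition ell_minus (p : nat) (eta tau s : R) : R :=
  cos tau * sin (tau * eta * s - PI / INR p)
  + s * sin tau * cos (tau * eta * s - PI / INR p).

Definition is_smallest_pos_root (f : R -> R) (t : R) : Prop :=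
  0 < t /\ f t = 0 /\ (forall u, 0 < u < t -> f u <> 0).

Definition is_tau_l_minus (p : nat) (eta s t : R) : Prop :=
  is_smallest_pos_root (fun tau => ell_minus p eta tau s) t.

(* At [tau = 0] we have [ell_- = - sin (pi/p) < 0], so it suffices to find a
   point [T] in [(0, pi/2]] where [ell_- >= 0]; the first zero of the
   continuous function [ell_-] then lies in [(0, T]].  If the phase
   [tau eta s - pi/p] vanishes at some [T <= pi/2], then [ell_-(T) = s sin T];
   otherwise at [T = pi/2] the phase lies in [[-pi/p, 0]] and
   [ell_-(pi/2) = s cos (phase) >= 0]. *)

From Stdlib Require Import Reals Lra Lia.
Open Scope R_scope.

Lemma zero_free_extend (f : R -> R) (x : R) :
  continuity_pt f x -> f x <> 0 -> (forall y, 0 <= y < x -> f y <> 0) ->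
  exists d, 0 < d /\ forall y, 0 <= y <= x + d -> f y <> 0.
Proof.
  intros Hc Hfx Hbelow.
  destruct (continuous_neq_0 f x Hc Hfx) as [eps Heps].
  pose proof (cond_pos eps).
  exists (eps / 2); split; [lra|]; intros y Hy.
  destruct (Rlt_le_dec y x) as [Hyx|Hxy]; [apply Hbelow; lra|].
  replace y with (x + (y - x)) by ring.
  apply Heps; rewrite Rabs_right; lra.
Qed.

Lemma smallest_pos_root_le (f : R -> R) (T : R) :
  continuity f -> f 0 < 0 -> 0 < T -> 0 <= f T ->
  exists t, is_smallest_pos_root f t /\ t <= T.
Proof.
  intros Hc Hf0 HT HfT.
  assert (Hroot : ~ (forall y, 0 <= y <= T -> f y <> 0)).
  { intros Hnz.
    assert (HfT' : 0 < f T) by (specialize (Hnz T); lra).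
    destruct (IVT f 0 T Hc HT Hf0 HfT') as [z [Hz Hfz]].
    exact (Hnz z Hz Hfz). }
  (* [t] is the supremum of the zero-free initial segments [[0, x]] of [[0, T]]. *)
  set (E := fun x => 0 <= x <= T /\ forall y, 0 <= y <= x -> f y <> 0).
  assert (HE0 : E 0).
  { split; [lra|]; intros y Hy; replace y with 0 by lra; lra. }
  destruct (completeness E) as [t [Hub Hlub]].
  { exists T; intros x [Hx _]; lra. }
  { exists 0; exact HE0. }
  assert (HtT : t <= T) by (apply Hlub; intros x [Hx _]; lra).
  pose proof (Hub 0 HE0) as Ht_ge0.
  assert (Hbelow : forall u, 0 <= u < t -> f u <> 0).
  { intros u Hu Hfu.
    assert (t <= u); [|lra].
    apply Hlub; intros x [Hx Hnz].
    destruct (Rle_lt_dec x u) as [|Hlt]; [assumption|].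
    exfalso; apply (Hnz u); [lra | exact Hfu]. }
  assert (Hbeyond : forall x, 0 <= x <= t -> f x <> 0 -> t = T \/ x < t).
  { intros x Hx Hfx.
    destruct (zero_free_extend f x (Hc x) Hfx) as [d [Hd Hnz]];
      [intros y Hy; apply Hbelow; lra|].
    destruct (Req_dec t T) as [|HtT']; [now left|right].
    assert (Hm : E (Rmin (x + d) T)).
    { split; [split; [apply Rmin_glb|apply Rmin_r]; lra|].
      intros y Hy; apply Hnz; pose proof (Rmin_l (x + d) T); lra. }
    apply Hub in Hm.
    assert (x < Rmin (x + d) T) by (apply Rmin_glb_lt; lra).
    lra. }
  assert (Ht0 : 0 < t).
  { destruct (Hbeyond 0) as [|]; [lra | apply Rlt_not_eq; exact Hf0 | lra | lra]. }
  assert (Hft : f t = 0).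
  { destruct (Req_dec (f t) 0) as [|Hft]; [assumption|exfalso].
    destruct (Hbeyond t) as [|]; [lra | exact Hft | | lra].
    apply Hroot; intros y Hy.
    destruct (Req_dec y t) as [->|]; [exact Hft | apply Hbelow; lra]. }
  exists t; repeat split; try lra.
  intros u Hu; apply Hbelow; lra.
Qed.

Lemma PI_div_INR_bounds (p : nat) : (2 <= p)%nat -> 0 < PI / INR p <= PI / 2.
Proof.
  intros Hp.
  assert (HP : 2 <= INR p) by (apply (le_INR 2) in Hp; simpl in Hp; lra).
  pose proof PI_RGT_0.
  split; [apply Rdiv_lt_0_compat; lra|].
  apply Rmult_le_compat_l; [lra|]. apply Rinv_le_contravar; lra.
Qed.

Lemma continuity_ell_minus (p : nat) (eta s : R) :
  continuity (fun tau => ell_minus p eta tau s).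
Proof. intro x; unfold ell_minus; reg. Qed.

Lemma ell_minus_0 (p : nat) (eta s : R) :
  ell_minus p eta 0 s = - sin (PI / INR p).
Proof.
  unfold ell_minus; rewrite cos_0, sin_0.
  replace (0 * eta * s - PI / INR p) with (- (PI / INR p)) by ring.
  rewrite sin_neg; ring.
Qed.

Lemma ell_minus_phase0 (p : nat) (eta tau s : R) :
  tau * eta * s = PI / INR p -> ell_minus p eta tau s = s * sin tau.
Proof.
  intros Hphase; unfold ell_minus.
  replace (tau * eta * s - PI / INR p) with 0 by lra.
  rewrite sin_0, cos_0; ring.
Qed.

Lemma ell_minus_PI2 (p : nat) (eta s : R) :
  ell_minus p eta (PI / 2) s = s * cos (PI / 2 * eta * s - PI / INR p).
Proof. unfold ell_minus; rewrite cos_PI2, sin_PI2; ring. Qed.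

Lemma ell_minus_nonneg_before_PI2 (p : nat) (eta s : R) :
  (2 <= p)%nat -> 0 <= eta -> 0 <= s ->
  exists T, 0 < T <= PI / 2 /\ 0 <= ell_minus p eta T s.
Proof.
  intros Hp Heta Hs.
  destruct (PI_div_INR_bounds p Hp) as [Hq0 Hq1].
  assert (HP : 0 < INR p) by (apply lt_0_INR; lia).
  assert (Hes : 0 <= eta * s) by (apply Rmult_le_pos; lra).
  destruct (Rle_lt_dec (PI / 2 * (eta * s)) (PI / INR p)) as [Hle|Hlt].
  - exists (PI / 2); split; [pose proof PI2_RGT_0; lra|].
    rewrite ell_minus_PI2; apply Rmult_le_pos; [lra|].
    assert (0 <= PI / 2 * (eta * s)) by (apply Rmult_le_pos; lra).
    apply cos_ge_0; lra.
  - assert (Hes' : 0 < eta * s) by (pose proof PI2_RGT_0; nra).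
    assert (Heta0 : eta <> 0) by (intros ->; lra).
    assert (Hs0 : s <> 0) by (intros ->; lra).
    set (T := PI / INR p / (eta * s)).
    assert (HT0 : 0 < T) by (apply Rdiv_lt_0_compat; lra).
    assert (HTle : T < PI / 2).
    { apply (Rmult_lt_reg_r (eta * s)); [lra|].
      replace (T * (eta * s)) with (PI / INR p) by (unfold T; field; repeat split; lra).
      lra. }
    exists T; split; [lra|].
    assert (Hphase : T * eta * s = PI / INR p)
      by (unfold T; field; repeat split; lra).
    rewrite (ell_minus_phase0 p eta T s Hphase).
    apply Rmult_le_pos; [lra|].
    apply sin_ge_0; lra.
Qed.

Theorem mainTheorem5 (p : nat) (eta : R) :
  (2 <= p)%nat -> 0 < eta ->
  forall s : R, 0 <= s <= 1 ->
  exists t : R, is_tau_l_minus p eta s t /\ t <= PI / 2.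
Proof.
  intros Hp Heta s Hs.
  destruct (ell_minus_nonneg_before_PI2 p eta s Hp) as [T [[HT0 HT] HfT]];
    [lra | lra |].
  destruct (smallest_pos_root_le (fun tau => ell_minus p eta tau s) T)
    as [t [Ht HtT]]; auto.
  - apply continuity_ell_minus.
  - rewrite ell_minus_0.
    destruct (PI_div_INR_bounds p Hp).
    assert (0 < sin (PI / INR p)) by (apply sin_gt_0; lra); lra.
  - exists t; split; [exact Ht | lra].
Qed.
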